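(* Let $G$ be a profinite group such that the set $FC(G)=\{g\in G : g \text{ has only finitely many conjugates in } G\}$ is dense in $G$. Then: (1) if $g\in FC(G)$, then the closed subgroup $[G,g]$ is finite; (2) if $g\in FC(G)$ is an element of finite order, then the closed subgroup $\langle g^G\rangle$ topologically generated by the conjugacy class of $g$ is finite.
   Context: For subsets $X,Y$ of a profinite group, $[X,Y]$ denotes the closed subgroup topologically generated by all commutators $[x,y]$ with $x\in X$, $y\in Y$; $[G,g]$ means $[G,\{g\}]$. $g^G$ denotes the conjugacy class of $g$ in $G$. *)

From HB Require Import structures.
From mathcomp Require Import all_boot all_order monoid.
From mathcomp Require Import all_classical.
From mathcomp Require Import topology.
Set Implicit Arguments. Unset Strict Implicit. Unset Printing Implicit Defensive.

Local Open Scope classical_set_scope.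
Local Open Scope group_scope.

HB.structure Definition TopGroup := {G of Group G & Topological G}.
Notation topGroupType := TopGroup.type.

Definition profinite (G : topGroupType) : Prop :=
  [/\ continuous (fun p : G * G => p.1 * p.2),
      continuous (fun x : G => x^-1),
      compact [set: G],
      hausdorff_space G &
      totally_disconnected [set: G]].

Definition conj_class (G : topGroupType) (g : G) : set G :=
  [set g ^ x | x in [set: G]].

Definition FC (G : topGroupType) : set G :=
  [set g | finite_set (conj_class g)].

Definition is_subgroup (G : topGroupType) (H : set G) : Prop :=
  [/\ H 1, (forall x y, H x -> H y -> H (x * y)) & (forall x, H x -> H x^-1)].

Definition topgen (G : topGroupType) (S : set G) : set G :=
  \bigcap_(H in [set H : set G | is_subgroup H /\ closed H /\ S `<=` H]) H.

Definition comm_sub (G : topGroupType) (X Y : set G) : set G :=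
  topgen [set [~ x, y] | x in X & y in Y].

Definition finite_order (G : topGroupType) (g : G) : Prop :=
  exists n : nat, (0 < n)%N /\ g ^+ n = 1.
Arguments FC : clear implicits.

From HB Require Import structures.
From mathcomp Require Import all_boot all_order monoid.
From mathcomp Require Import all_classical.
From mathcomp Require Import topology.
From mathcomp Require Import zify.
Set Implicit Arguments. Unset Strict Implicit. Unset Printing Implicit Defensive.

(* (2) is Dietz's lemma: if X is a finite set of elements of exponent N that
   is closed under conjugation, then the products of elements of X form a
   finite subgroup, because a letter occurring N times in a word can be
   collected to the front (conjugating the letters it passes) and cancelled,
   so every product has length at most |X| N.  A finite subgroup of a
   Hausdorff group is closed, hence contains the closed subgroup generated
   by X.
   For (1), [G, g] is generated by X = {(g^u)^-1 g^v}, which is finite and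
   closed under conjugation.  Each element of X is a conjugate of a
   commutator [x, g], and by density of FC(G) the element x can be taken in
   FC(G).  For a, b in FC(G) the commutator [a, b] has finite order (Schur):
   with C = C_G(a, b) and H = C_G(C), the group Z = C :&: H is central and of
   finite index in H, so some power [a, b]^k lies in Z, and the transfer
   H -> Z kills [a, b] while mapping z in Z to z^|H : Z|.  Then Dietz's lemma
   applies to X. *)

Local Open Scope classical_set_scope.
Local Open Scope group_scope.

Lemma size_le_sum_count_mem (T : eqType) (s w : seq T) : all (mem s) w ->
  (size w <= \sum_(x <- s) count_mem x w)%N.
Proof.
elim: w => [|a w IH] //= /andP [aS /IH le].
rewrite big_split /= -add1n leq_add //.
elim: (s) aS => [|b s' IHs] //; rewrite inE big_cons.
case/orP => [/eqP ->|/IHs h]; first by rewrite eqxx.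
by rewrite (leq_trans h) // leq_addl.
Qed.

Lemma pigeonhole_nat (T : Type) (f : nat -> T) (B : set T) :
  finite_set B -> (forall i, B (f i)) -> exists i j, (i < j)%N /\ f i = f j.
Proof.
move=> finB fB; apply: contrapT => noncoll.
have f_inj : {in f @^-1` B &, injective f}.
  move=> i j _ _ eq_f; apply: contrapT => neq_ij; apply: noncoll.
  by case: (ltngtP i j) => // [ij|ji]; [exists i, j | exists j, i].
apply: infinite_nat; rewrite -(_ : f @^-1` B = setT).
  exact: finite_preimage.
by apply/seteqP; split=> // i _; apply: fB.
Qed.

Section GroupFacts.
Variable G : groupType.
Implicit Types (x y z : G) (A B : set G).

Definition subgroup A :=
  [/\ A 1, forall x y, A x -> A y -> A (x * y) & forall x, A x -> A x^-1].

Definition cent A : set G := [set x | forall y, A y -> commute x y].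

Lemma subgroup1 A : subgroup A -> A 1.
Proof. by case. Qed.

Lemma subgroupM A x y : subgroup A -> A x -> A y -> A (x * y).
Proof. by case=> _ + _; apply. Qed.

Lemma subgroupV A x : subgroup A -> A x -> A x^-1.
Proof. by case=> _ _; apply. Qed.

Lemma subgroupX A x n : subgroup A -> A x -> A (x ^+ n).
Proof.
move=> gA Ax; elim: n => [|n IH]; first exact: subgroup1.
by rewrite expgS; apply: subgroupM.
Qed.

Lemma subgroupR A x y : subgroup A -> A x -> A y -> A [~ x, y].
Proof.
move=> gA Ax Ay; rewrite /commg /conjg.
by do !apply: subgroupM => //; apply: subgroupV.
Qed.

Lemma subgroupI A B : subgroup A -> subgroup B -> subgroup (A `&` B).
Proof.
move=> gA gB; split=> [|x y [Ax Bx] [Ay By]|x [Ax Bx]]; split;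
  by [apply: subgroup1 | apply: subgroupM | apply: subgroupV].
Qed.

Lemma cent_subgroup A : subgroup (cent A).
Proof.
split=> [y _|x y cx cy z Az|x cx z Az]; first exact/commute_sym/commute1.
  by apply/commute_sym/commuteM; apply/commute_sym; [apply: cx | apply: cy].
by apply/commute_sym/commuteV/commute_sym/cx.
Qed.

Lemma sub_cent_cent A : A `<=` cent (cent A).
Proof. by move=> x Ax y cy; apply/commute_sym/cy. Qed.

Lemma conjg_fix_commute x y : x ^ y = x <-> commute x y.
Proof. by split=> [/conjg_fixP/commgP | /commgP/conjg_fixP]. Qed.

Lemma conjg_eq x u v : x ^ u = x ^ v <-> commute x (u / v).
Proof.
rewrite -conjg_fix_commute conjgM; split=> [->|e]; first by rewrite conjgK.
by rewrite -[x ^ u](conjgKV v) e.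
Qed.

Lemma prodg_nseq x k : \prod_(y <- nseq k x) y = x ^+ k.
Proof. by rewrite big_nseq iter_mulg_1. Qed.

Lemma uniform_exponent A : finite_set A ->
  (forall x, A x -> exists n, (0 < n)%N /\ x ^+ n = 1) ->
  exists n, (0 < n)%N /\ forall x, A x -> x ^+ n = 1.
Proof.
case/finite_seqP=> s ->; elim: s => [|t s IH] tors; first by exists 1%N.
have [m [m_gt0 tm]] := tors t (mem_head t s).
have [n [n_gt0 sn]] := IH (fun x xs => tors x (@mem_behead _ (t :: s) x xs)).
exists (m * n)%N; split=> [|x]; first by rewrite muln_gt0 m_gt0.
rewrite /= inE => /orP[/eqP ->|xs]; first by rewrite expgnA tm expg1n.
by rewrite mulnC expgnA sn ?expg1n.
Qed.

Lemma perm_prodg_commute (I : eqType) (s t : seq I) (F : I -> G) :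
  {in s &, forall i j, commute (F i) (F j)} -> perm_eq s t ->
  \prod_(i <- s) F i = \prod_(i <- t) F i.
Proof.
elim: s t => [|i s IH] t cF; first by move/perm_size/esym/size0nil ->.
move=> pst; have it : i \in t by rewrite -(perm_mem pst) mem_head.
case/splitPr: it pst => t1 t2 pst.
have t1s : {subset t1 <= i :: s}.
  by move=> j jt; rewrite (perm_mem pst) mem_cat jt.
have {}pst : perm_eq s (t1 ++ t2).
  rewrite -(perm_cons i); apply: (perm_trans pst).
  by apply/permP => p; rewrite /= !count_cat /= addnCA.
have cFs : {in s &, forall j k, commute (F j) (F k)}.
  by move=> j k js ks; apply: cF; rewrite inE ?js ?ks orbT.
rewrite big_cons (IH _ cFs pst) !big_cat big_cons /= !mulgA; congr (_ * _).
by rewrite big_seq; apply: commute_prod => j /t1s; apply: cF; rewrite mem_head.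
Qed.

End GroupFacts.

Section Dietz.
Variables (G : groupType) (X : seq G) (N : nat).
Hypothesis X_conj : forall x y, x \in X -> x ^ y \in X.
Hypothesis N_gt0 : (0 < N)%N.
Hypothesis X_exp : forall x, x \in X -> x ^+ N = 1.

Definition word_prods_le k : set G :=
  [set \prod_(x <- w) x | w in [set w | all (mem X) w /\ (size w <= k)%N]].

Definition word_prods : set G :=
  [set \prod_(x <- w) x | w in [set w | all (mem X) w]].

Lemma prod_collect x w : all (mem X) w ->
  exists w', [/\ all (mem X) w', x \notin w',
    size w = (count_mem x w + size w')%N &
    \prod_(y <- w) y = x ^+ count_mem x w * \prod_(y <- w') y].
Proof.
elim: w => [|a w IH] /=; first by exists [::]; rewrite !big_nil mulg1.
case/andP=> aX /IH[w' [w'X xw' sz pw]].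
have [->|ax] := eqVneq a x.
  by exists w'; rewrite sz add1n addSn big_cons pw expgS mulgA.
set c := count_mem x w.
have x_fix : x ^ (x ^+ c) = x by apply/conjg_fixP; rewrite commgXg.
exists (a ^ (x ^+ c) :: w'); split=> /=.
- by rewrite X_conj.
- rewrite inE negb_or xw' andbT -{1}x_fix (inj_eq (@conjg_inj _ _)).
  by rewrite eq_sym.
- by rewrite sz add0n addnS.
- by rewrite add0n !big_cons pw mulgA (conjgC a) -mulgA.
Qed.

Lemma prod_short_word w : all (mem X) w ->
  exists2 w', all (mem X) w' /\ (size w' <= size X * N)%N &
              \prod_(y <- w') y = \prod_(y <- w) y.
Proof.
have [m] := ubnP (size w); elim: m w => // m IH w szw wX.
have [short|long] := leqP (size w) (size X * N); first by exists w.
have [x xX Nx] : exists2 x, x \in X & (N <= count_mem x w)%N.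
  apply/hasP/negPn/negP => /hasPn few.
  have : (\sum_(x <- X) count_mem x w <= \sum_(x <- X) N)%N.
    by rewrite !big_seq; apply: leq_sum => x /few; rewrite -ltnNge => /ltnW.
  rewrite big_const_seq count_predT iter_addn_0 mulnC.
  by move/(leq_trans (size_le_sum_count_mem wX)); rewrite leqNgt long.
have [w' [w'X _ sz pw]] := prod_collect x wX.
pose v := nseq (count_mem x w - N) x ++ w'.
have vX : all (mem X) v by rewrite all_cat w'X andbT all_nseq /= xX orbT.
have szv : (size v < m)%N.
  by rewrite size_cat size_nseq -ltnS (leq_trans _ szw) // sz; lia.
have [v' v'X pv'] := IH v szv vX; exists v' => //.
by rewrite pv' pw big_cat prodg_nseq -{2}(subnK Nx) expgnDr X_exp ?mulg1.
Qed.

Lemma finite_word_prods_le k : finite_set (word_prods_le k).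
Proof.
elim: k => [|k IH].
  apply: sub_finite_set (finite_set1 1) => _ [w [_ szw] <-].
  by rewrite leqn0 size_eq0 in szw; rewrite (eqP szw) big_nil.
pose B := [set 1] `|` [set x * y | x in [set` X] & y in word_prods_le k].
apply: (sub_finite_set (B := B)); last first.
  rewrite finite_setU; split; first exact: finite_set1.
  exact: finite_image2 (finite_seq X) IH.
move=> _ [[|a w] [/= awX szw] <-]; first by left; rewrite big_nil.
case/andP: awX => aX wX.
by right; exists a => //; exists (\prod_(y <- w) y); [exists w | rewrite big_cons].
Qed.

Lemma finite_word_prods : finite_set word_prods.
Proof.
apply: sub_finite_set (finite_word_prods_le (size X * N)) => _ [w wX <-].
by have [w' ? <-] := prod_short_word wX; exists w'.
Qed.

Lemma word_prods_subgroup : subgroup word_prods.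
Proof.
have prodsM x y : word_prods x -> word_prods y -> word_prods (x * y).
  move=> [w wX <-] [w' w'X <-]; exists (w ++ w'); last by rewrite big_cat.
  by rewrite /= all_cat; apply/andP.
split=> //; first by exists [::]; rewrite ?big_nil.
move=> _ [w wX <-]; elim: w wX => [|a w IH] /=.
  by move=> _; rewrite big_nil invg1; exists [::]; rewrite ?big_nil.
case/andP=> aX /IH wV; rewrite big_cons invgM; apply: prodsM => //.
exists (nseq N.-1 a); first by rewrite /= all_nseq /= aX orbT.
by rewrite prodg_nseq; apply/esym/mulg1_eq; rewrite -expgS prednK // X_exp.
Qed.

Lemma sub_word_prods : [set` X] `<=` word_prods.
Proof. by move=> x xX; exists [:: x]; rewrite /= ?xX // big_seq1. Qed.

End Dietz.

Section Transfer.
Variables (G : groupType) (H Z : set G).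
Hypotheses (H_group : subgroup H) (Z_group : subgroup Z) (sZH : Z `<=` H).
Hypothesis Z_central : forall h z, H h -> Z z -> commute h z.
Variables (T : seq G) (tr : G -> G).
Hypotheses (T_uniq : uniq T) (T_sub : forall t, t \in T -> H t).
Hypothesis tr_T : forall h, H h -> tr h \in T.
Hypothesis tr_coset : forall h, H h -> Z (h / tr h).
Hypothesis T_cosets : forall t t', t \in T -> t' \in T -> Z (t / t') -> t = t'.

Definition transfer_factor h t := t * h / tr (t * h).

Definition transfer h := \prod_(t <- T) transfer_factor h t.

Lemma Z_commute z z' : Z z -> Z z' -> commute z z'.
Proof. by move/sZH; apply: Z_central. Qed.

Lemma tr_mulZ z x : Z z -> H x -> tr (z * x) = tr x.
Proof.
move=> Zz Hx; have Hzx := subgroupM H_group (sZH Zz) Hx.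
apply: T_cosets; try exact: tr_T.
have -> : tr (z * x) / tr x = (z * x / tr (z * x))^-1 * z * (x / tr x).
  by rewrite invgF invgM !mulgA !mulgVK.
apply: (subgroupM Z_group _ (tr_coset Hx)); apply: (subgroupM Z_group _ Zz).
exact/(subgroupV Z_group)/tr_coset.
Qed.

Lemma tr_id t : t \in T -> tr t = t.
Proof.
move=> tT; have Ht := T_sub tT; apply: T_cosets => //; first exact: tr_T.
by rewrite -invgF; apply/(subgroupV Z_group)/tr_coset.
Qed.

Lemma transfer_factor_Z h t : H h -> t \in T -> Z (transfer_factor h t).
Proof. by move=> Hh tT; exact: tr_coset (subgroupM H_group (T_sub tT) Hh). Qed.

Lemma transfer_factorM h h' t : H h -> H h' -> t \in T ->
  transfer_factor (h * h') t =
    transfer_factor h t * transfer_factor h' (tr (t * h)).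
Proof.
move=> Hh Hh' tT; rewrite /transfer_factor.
have -> : t * (h * h') = t * h / tr (t * h) * (tr (t * h) * h').
  by rewrite !mulgA mulgVK.
have HtrT := T_sub (tr_T (subgroupM H_group (T_sub tT) Hh)).
rewrite (tr_mulZ (transfer_factor_Z Hh tT) (subgroupM H_group HtrT Hh')).
by rewrite !mulgA mulgVK.
Qed.

Lemma tr_mul_injective h :
  H h -> {in T &, injective (fun t => tr (t * h))}.
Proof.
move=> Hh t t' tT t'T /= eq_tr; apply: T_cosets => //.
have -> : t / t' = transfer_factor h t / transfer_factor h t'.
  by rewrite /transfer_factor eq_tr invgF !mulgA mulgVK invgM mulgA mulgK.
by apply/(subgroupM Z_group)/(subgroupV Z_group); apply: transfer_factor_Z.
Qed.

Lemma transferM h h' :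
  H h -> H h' -> transfer (h * h') = transfer h * transfer h'.
Proof.
move=> Hh Hh'; rewrite /transfer big_seq.
under eq_bigr => t tT do rewrite transfer_factorM //.
rewrite prodgM_commute -?big_seq; last first.
  move=> t t' tT t'T; apply: Z_commute; apply: transfer_factor_Z => //.
  exact/tr_T/(subgroupM H_group (T_sub t'T)).
congr (_ * _); rewrite -(big_map (fun t => tr (t * h)) xpredT) /=.
have trT : {subset map (fun t => tr (t * h)) T <= T}.
  by move=> _ /mapP[t tT ->]; apply/tr_T/(subgroupM H_group (T_sub tT)).
have uniq_trT : uniq (map (fun t => tr (t * h)) T).
  by rewrite map_inj_in_uniq //; apply: tr_mul_injective.
apply: perm_prodg_commute.
  by move=> t t' /trT tT /trT t'T; apply: Z_commute; apply: transfer_factor_Z.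
apply: uniq_perm => //; apply: (uniq_min_size uniq_trT trT _).2.
by rewrite size_map.
Qed.

Lemma transferZ z : Z z -> transfer z = z ^+ size T.
Proof.
move=> Zz; rewrite /transfer (eq_big_seq (fun=> z)).
  by rewrite big_const_seq count_predT iter_mulg_1.
move=> t tT; rewrite /transfer_factor (Z_central (T_sub tT) Zz).
by rewrite (tr_mulZ Zz (T_sub tT)) tr_id // mulgK.
Qed.

Lemma transfer_Z h : H h -> Z (transfer h).
Proof.
move=> Hh; rewrite /transfer big_seq; apply: big_ind; first exact: subgroup1.
  by move=> ? ?; apply: subgroupM.
by move=> t tT; apply: transfer_factor_Z.
Qed.

Lemma transferV h : H h -> transfer h^-1 = (transfer h)^-1.
Proof.
move=> Hh; apply/esym/mulg1_eq.
rewrite -transferM ?mulgV ?transferZ ?expg1n //.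
  exact: subgroup1.
exact: subgroupV.
Qed.

Lemma transferX h n : H h -> transfer (h ^+ n) = transfer h ^+ n.
Proof.
move=> Hh; elim: n => [|n IH].
  by rewrite transferZ ?expg1n //; apply: subgroup1.
by rewrite !expgS transferM ?IH //; apply: subgroupX.
Qed.

Lemma transferR x y : H x -> H y -> transfer [~ x, y] = 1.
Proof.
move=> Hx Hy; have [_ HM HV] := H_group.
have HxV := HV _ Hx; have HyV := HV _ Hy; have Hxy := HM _ _ Hx Hy.
have Hyxy := HM _ _ HyV Hxy.
rewrite /commg /conjg !transferM ?transferV //.
by rewrite (Z_commute (transfer_Z Hx) (transfer_Z Hy)) mulKg mulVg.
Qed.

Lemma transfer_commg_expg x y k : H x -> H y -> Z ([~ x, y] ^+ k) ->
  [~ x, y] ^+ (k * size T) = 1.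
Proof.
move=> Hx Hy Zc; rewrite expgnA -transferZ // transferX ?transferR ?expg1n //.
exact: subgroupR.
Qed.

End Transfer.

Lemma transversal_of_key (G : groupType) (H Z : set G) (K : Type) (key : G -> K) :
    subgroup H -> (forall u v, H u -> H v -> key u = key v <-> Z (u / v)) ->
    finite_set (key @` H) ->
  exists T (tr : G -> G), [/\ uniq T, forall t, t \in T -> H t,
    forall h, H h -> tr h \in T, forall h, H h -> Z (h / tr h) &
    forall t t', t \in T -> t' \in T -> Z (t / t') -> t = t'].
Proof.
move=> gH keyP fin_key.
pose rep k := xget 1 [set t | H t /\ key t = k].
have repP h : H h -> H (rep (key h)) /\ key (rep (key h)) = key h.
  by move=> Hh; apply: (@xgetI _ 1 [set t | H t /\ key t = key h] h).
have : finite_set ((rep \o key) @` H).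
  by rewrite -image_comp; apply: finite_image.
case/finite_seqP=> s sE; exists (undup s), (rep \o key).
have Ts t : t \in undup s -> exists2 h, H h & rep (key h) = t.
  rewrite mem_undup => ts; have : [set` s] t by [].
  by rewrite -sE => -[h Hh <-]; exists h.
split=> [|t /Ts[h Hh <-]|h Hh|h Hh|_ _ /Ts[h Hh <-] /Ts[h' Hh' <-]].
- exact: undup_uniq.
- by case: (repP h Hh).
- by rewrite mem_undup; have : [set` s] (rep (key h)) by rewrite -sE; exists h.
- by have [Hr eq_key] := repP h Hh; apply/keyP => //; rewrite eq_key.
- have [Hr eq_key] := repP h Hh; have [Hr' eq_key'] := repP h' Hh'.
  by move/keyP => /(_ Hr Hr'); rewrite eq_key eq_key' => ->.
Qed.

Lemma commg_finite_order (G : groupType) (a b : G) :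
    finite_set [set a ^ y | y in [set: G]] ->
    finite_set [set b ^ y | y in [set: G]] ->
  exists n, (0 < n)%N /\ [~ a, b] ^+ n = 1.
Proof.
move=> fin_a fin_b.
pose C := cent [set a; b]; pose H := cent C; pose Z := C `&` H.
have gH : subgroup H := cent_subgroup C.
have gZ : subgroup Z := subgroupI (cent_subgroup _) gH.
pose key h := (a ^ h, b ^ h).
have keyP u v : H u -> H v -> key u = key v <-> Z (u / v).
  move=> Hu Hv; have Huv := subgroupM gH Hu (subgroupV gH Hv).
  split=> [[/conjg_eq ca /conjg_eq cb]|[Cuv _]].
    by split=> // y [->|->]; apply: commute_sym.
  by congr pair; apply/conjg_eq/commute_sym/Cuv; [left | right].
have fin_key : finite_set (key @` H).
  apply: sub_finite_set (finite_image2 pair fin_a fin_b) => _ [h _ <-].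
  by exists (a ^ h); [exists h | exists (b ^ h); [exists h|]].
have [T [tr [T_uniq T_sub tr_T tr_coset T_cosets]]] :=
  transversal_of_key gH keyP fin_key.
have [Ha Hb] : H a /\ H b by split; apply: sub_cent_cent; [left | right].
pose c := [~ a, b]; have Hc n : H (c ^+ n) := subgroupX n gH (subgroupR gH Ha Hb).
have [i [j [lt_ij eq_key]]] :=
  pigeonhole_nat (f := fun i => key (c ^+ i)) fin_key
    (fun i => ex_intro2 _ _ _ (Hc i) erefl).
have Zc : Z (c ^+ (j - i)).
  by rewrite expgnFr ?(ltnW lt_ij) //; apply/(keyP _ _ (Hc j) (Hc i)).
exists ((j - i) * size T)%N; split.
  by rewrite muln_gt0 subn_gt0 lt_ij; case: (T) (tr_T _ (subgroup1 gH)).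
have sZH : Z `<=` H by move=> z [].
have Z_central h z : H h -> Z z -> commute h z by move=> Hh [Cz _]; apply: Hh.
exact: (transfer_commg_expg gH gZ sZH Z_central
          T_uniq T_sub tr_T tr_coset T_cosets).
Qed.

Section TopologicalGroup.
Variable G : topGroupType.

Lemma topgenS (S1 S2 : set G) : S1 `<=` S2 -> topgen S1 `<=` topgen S2.
Proof.
move=> S12; apply: sub_bigcap => K [gK [cK S2K]]; apply: bigcap_inf.
by split=> //; split=> //; apply: subset_trans S2K.
Qed.

Hypothesis G_T2 : hausdorff_space G.

Lemma finite_closed (A : set G) : finite_set A -> closed A.
Proof. exact: (accessible_finite_set_closed.1 (hausdorff_accessible G_T2)). Qed.

Lemma topgen_sub_finite (S K : set G) :
  subgroup K -> finite_set K -> S `<=` K -> topgen S `<=` K.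
Proof.
by move=> gK finK SK; apply: bigcap_inf; do 2!split=> //; apply: finite_closed.
Qed.

Lemma finite_topgen_exponent (S : set G) N : (0 < N)%N -> finite_set S ->
    (forall x y, S x -> S (x ^ y)) -> (forall x, S x -> x ^+ N = 1) ->
  finite_set (topgen S).
Proof.
move=> N_gt0 /finite_seqP[X ->] X_conj X_exp.
have fin := finite_word_prods X_conj N_gt0 X_exp.
have gP := word_prods_subgroup N_gt0 X_exp.
exact: sub_finite_set (topgen_sub_finite gP fin (@sub_word_prods _ X)) fin.
Qed.

Hypotheses (mul_cont : continuous (fun p : G * G => p.1 * p.2))
  (inv_cont : continuous (fun x : G => x^-1)).

Lemma continuous_mulg (T : topologicalType) (f h : T -> G) :
  continuous f -> continuous h -> continuous (fun t => f t * h t).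
Proof.
move=> f_cont h_cont t.
exact: (@continuous2_cvg _ _ _ _ (nbhs t) _ f h (fun u v => u * v) _ _
  (@mul_cont (f t, h t)) (f_cont t) (h_cont t)).
Qed.

Lemma continuous_conjg x : continuous (fun y : G => x ^ y).
Proof.
rewrite /conjg; apply: continuous_mulg inv_cont _.
by apply: continuous_mulg; [exact: cst_continuous | move=> y].
Qed.

Lemma FC_conjugator g x :
  dense (FC G) -> FC G g -> exists2 x', FC G x' & g ^ x' = g ^ x.
Proof.
move=> FC_dense FCg.
have closed_other : closed (conj_class g `\ (g ^ x)).
  by apply: finite_closed; apply: (sub_finite_set _ FCg); apply: subDsetl.
have open_fibre : open [set y | g ^ y = g ^ x].
  have -> : [set y | g ^ y = g ^ x] =
             (fun y => g ^ y) @^-1` ~` (conj_class g `\ (g ^ x)).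
    apply/seteqP; split=> y /=; first by move=> -> [_]; apply.
    by move=> other; apply: contrapT => neq; apply: other; split=> //; exists y.
  by apply: (continuousP _).1; [exact: continuous_conjg | exact: closed_openC].
by have [y [gy FCy]] := FC_dense _ (ex_intro _ x erefl) open_fibre; exists y.
Qed.

End TopologicalGroup.

Theorem lemma2p2 (G : topGroupType) :
  profinite G -> dense (FC G) ->
  (forall g : G, FC G g -> finite_set (comm_sub [set: G] [set g])) /\
  (forall g : G, FC G g -> finite_order g ->
     finite_set (topgen (conj_class g))).
Proof.
case=> mul_cont inv_cont _ G_T2 _ FC_dense.
split=> [g FCg|g FCg [n [n_gt0 gn]]]; last first.
  apply: (finite_topgen_exponent G_T2 n_gt0 (FCg : finite_set (conj_class g))).
  - by move=> _ y [z _ <-]; exists (z * y) => //; rewrite conjgM.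
  - by move=> _ [z _ <-]; rewrite -conjXg gn conj1g.
pose X := [set x^-1 * y | x in conj_class g & y in conj_class g].
have X_tors t : X t -> exists n, (0 < n)%N /\ t ^+ n = 1.
  move=> [_ [u _ <-] [_ [v _ <-] <-]].
  have [x' FCx' gx'] := FC_conjugator G_T2 mul_cont inv_cont (u / v) FC_dense FCg.
  have [n [n_gt0 cn]] := commg_finite_order FCx' FCg.
  exists n; split=> //.
  have -> : (g ^ u)^-1 * g ^ v = [~ x', g] ^ v.
    by rewrite commgEr conjMg -conjgM conjVg conjgM gx' -conjgM mulgVK.
  by rewrite -conjXg cn conj1g.
have [N [N_gt0 X_exp]] := uniform_exponent (finite_image2 _ FCg FCg) X_tors.
apply: sub_finite_set (topgenS _) (finite_topgen_exponent G_T2 N_gt0 _ _ X_exp).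
- move=> _ [x _ [_ -> <-]]; exists (g ^ x); first by exists x.
  by exists g; [exists 1; rewrite ?conjg1 | rewrite commgEr conjVg].
- exact: finite_image2.
- move=> _ z [_ [u _ <-] [_ [v _ <-] <-]].
  exists (g ^ (u * z)); first by exists (u * z).
  by exists (g ^ (v * z)); [exists (v * z) | rewrite conjMg conjVg !conjgM].
Qed.
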